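(* Over $\mathsf{RCA_0}$ the following are equivalent: (1) $\mathsf{I}\Sigma^0_2$; (2) $\mathrm{SPP}$.
   Context: $\mathsf{RCA_0}$ is the base system of second order arithmetic; $\mathsf{I}\Sigma^0_2$ is induction for $\Sigma^0_2$-formulas. A natural number $k$ is identified with $\{0,\dots,k-1\}$. $\mathrm{SPP}_k$ (strong pigeonhole principle): for every $c:\mathbb N\to k$ there exists a set $I\subseteq k$ such that for all $i$, $i\in I$ iff $i<k$ and $c(x)=i$ for infinitely many $x$. $\mathrm{SPP}$ is $\forall k\,\mathrm{SPP}_k$. *)

(** L2-structures: first-order part [carrier] with 0,1,+,*,<, and a
    second-order part [sets] (a collection of subsets of the first-order part).
    Equality is interpreted as Coq equality. *)
Record L2str : Type := {
  carrier : Type;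
  zero : carrier;
  one : carrier;
  add : carrier -> carrier -> carrier;
  mul : carrier -> carrier -> carrier;
  lt : carrier -> carrier -> Prop;
  sets : (carrier -> Prop) -> Prop
}.

(** Syntax of L2, de Bruijn indices (number variables and set variables
    are counted separately). *)
Inductive term : Type :=
| tvar : nat -> term
| tzero : term
| tone : term
| tadd : term -> term -> term
| tmul : term -> term -> term.

Inductive form : Type :=
| fEq : term -> term -> form
| fLt : term -> term -> form
| fMem : term -> nat -> form
| fNeg : form -> form
| fAnd : form -> form -> form
| fOr : form -> form -> form
| fImp : form -> form -> form
| fAll : form -> form
| fEx : form -> form
| fBAll : term -> form -> form            (* forall n < t (t in outer context) *)
| fBEx : term -> form -> form
| fSAll : form -> form
| fSEx : form -> form.

Definition scons {A : Type} (a : A) (r : nat -> A) : nat -> A :=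
  fun n => match n with 0 => a | S k => r k end.

Fixpoint eval (M : L2str) (rho : nat -> carrier M) (t : term) : carrier M :=
  match t with
  | tvar n => rho n
  | tzero => zero M
  | tone => one M
  | tadd a b => add M (eval M rho a) (eval M rho b)
  | tmul a b => mul M (eval M rho a) (eval M rho b)
  end.

Fixpoint sat (M : L2str) (rho : nat -> carrier M)
    (sigma : nat -> carrier M -> Prop) (phi : form) : Prop :=
  match phi with
  | fEq a b => eval M rho a = eval M rho b
  | fLt a b => lt M (eval M rho a) (eval M rho b)
  | fMem a i => sigma i (eval M rho a)
  | fNeg p => ~ sat M rho sigma p
  | fAnd p q => sat M rho sigma p /\ sat M rho sigma q
  | fOr p q => sat M rho sigma p \/ sat M rho sigma q
  | fImp p q => sat M rho sigma p -> sat M rho sigma q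
  | fAll p => forall a, sat M (scons a rho) sigma p
  | fEx p => exists a, sat M (scons a rho) sigma p
  | fBAll t p => forall a, lt M a (eval M rho t) -> sat M (scons a rho) sigma p
  | fBEx t p => exists a, lt M a (eval M rho t) /\ sat M (scons a rho) sigma p
  | fSAll p => forall X, sets M X -> sat M rho (scons X sigma) p
  | fSEx p => exists X, sets M X /\ sat M rho (scons X sigma) p
  end.

Fixpoint isSigma00 (phi : form) : Prop :=
  match phi with
  | fEq _ _ | fLt _ _ | fMem _ _ => True
  | fNeg p => isSigma00 p
  | fAnd p q | fOr p q | fImp p q => isSigma00 p /\ isSigma00 q
  | fBAll _ p | fBEx _ p => isSigma00 p
  | _ => False
  end.

Fixpoint isSigma0 (k : nat) (phi : form) : Prop :=
  match k with
  | 0 => isSigma00 phi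
  | S j => match phi with fEx p => isPi0 j p | _ => False end
  end
with isPi0 (k : nat) (phi : form) : Prop :=
  match k with
  | 0 => isSigma00 phi
  | S j => match phi with fAll p => isSigma0 j p | _ => False end
  end.

Definition set_env (M : L2str) (sigma : nat -> carrier M -> Prop) : Prop :=
  forall i, sets M (sigma i).

(** Induction scheme for a class of formulas; the induction variable is
    number variable 0, all other free variables are parameters. *)
Definition Induction (P : form -> Prop) (M : L2str) : Prop :=
  forall phi, P phi ->
  forall (rho : nat -> carrier M) (sigma : nat -> carrier M -> Prop),
    set_env M sigma ->
    sat M (scons (zero M) rho) sigma phi ->
    (forall a, sat M (scons a rho) sigma phi ->
               sat M (scons (add M a (one M)) rho) sigma phi) ->
    forall a, sat M (scons a rho) sigma phi.

Definition BasicAxioms (M : L2str) : Prop :=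
  (forall n, add M n (one M) <> zero M) /\
  (forall m n, add M m (one M) = add M n (one M) -> m = n) /\
  (forall m, add M m (zero M) = m) /\
  (forall m n, add M m (add M n (one M)) = add M (add M m n) (one M)) /\
  (forall m, mul M m (zero M) = zero M) /\
  (forall m n, mul M m (add M n (one M)) = add M (mul M m n) m) /\
  (forall m, ~ lt M m (zero M)) /\
  (forall m n, lt M m (add M n (one M)) <-> (lt M m n \/ m = n)).

Definition Delta01_CA (M : L2str) : Prop :=
  forall phi psi, isSigma0 1 phi -> isPi0 1 psi ->
  forall (rho : nat -> carrier M) (sigma : nat -> carrier M -> Prop),
    set_env M sigma ->
    (forall a, sat M (scons a rho) sigma phi <-> sat M (scons a rho) sigma psi) ->
    exists X, sets M X /\ forall a, X a <-> sat M (scons a rho) sigma phi.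

Definition RCA0 (M : L2str) : Prop :=
  BasicAxioms M /\ Induction (isSigma0 1) M /\ Delta01_CA M.

Definition ISigma02 (M : L2str) : Prop := Induction (isSigma0 2) M.

Definition pair (M : L2str) (i j : carrier M) : carrier M :=
  add M (mul M (add M i j) (add M i j)) i.

(** C codes a function c : N -> k (Simpson II.3: C is a subset of N x k,
    total and single-valued). *)
Definition IsFunTo (M : L2str) (k : carrier M) (C : carrier M -> Prop) : Prop :=
  (forall n, C n -> exists x y, n = pair M x y /\ lt M y k) /\
  (forall x, exists y, C (pair M x y)) /\
  (forall x y y', C (pair M x y) -> C (pair M x y') -> y = y').

Definition SPPk (M : L2str) (k : carrier M) : Prop :=
  forall C, sets M C -> IsFunTo M k C ->
  exists I, sets M I /\
    forall i, I i <-> (lt M i k /\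
                       forall m, exists x, lt M m x /\ C (pair M x i)).

Definition SPP (M : L2str) : Prop := forall k, SPPk M k.

(* Finite sets of colours below k are coded by products of the
   pairwise coprime moduli q_i = (i+1)m + 1, where m is a common multiple of 1, ..., k;
   every code divides the product of all q_i, so codes are bounded.  Sigma02-induction
   on n for "some code s >= n lists only colours with no occurrence beyond a common
   bound b" therefore fails at a large n, giving a maximal such code s.  Each colour not
   listed in s occurs infinitely often, so the set of infinite colours is the Delta00 set
   {i < k | q_i does not divide s}.

   For a Sigma02 formula "exists b, forall x, X(a, b, x)", call t a
   progress stage of a when, for some j <= t, the candidates b <= j all have
   counterexamples below t + 1 but not below t; a has infinitely many progress stages
   iff the formula fails at a.  Colouring each
   stage (t, a) with a <= n by a, and every other number by n + 1, SPP returns the set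
   of a <= n at which the formula fails, and Delta00-induction along this set proves
   the induction instance up to n. *)

From Stdlib Require Import Arith Lia Setoid Ring Classical.

Fixpoint ren_term (f : nat -> nat) (t : term) : term :=
  match t with
  | tvar n => tvar (f n)
  | tzero => tzero
  | tone => tone
  | tadd a b => tadd (ren_term f a) (ren_term f b)
  | tmul a b => tmul (ren_term f a) (ren_term f b)
  end.

Definition up (f : nat -> nat) : nat -> nat :=
  fun n => match n with 0 => 0 | S k => S (f k) end.

Fixpoint ren_form (f : nat -> nat) (phi : form) : form :=
  match phi with
  | fEq a b => fEq (ren_term f a) (ren_term f b)
  | fLt a b => fLt (ren_term f a) (ren_term f b)
  | fMem a i => fMem (ren_term f a) i
  | fNeg p => fNeg (ren_form f p)
  | fAnd p q => fAnd (ren_form f p) (ren_form f q)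
  | fOr p q => fOr (ren_form f p) (ren_form f q)
  | fImp p q => fImp (ren_form f p) (ren_form f q)
  | fAll p => fAll (ren_form (up f) p)
  | fEx p => fEx (ren_form (up f) p)
  | fBAll t p => fBAll (ren_term f t) (ren_form (up f) p)
  | fBEx t p => fBEx (ren_term f t) (ren_form (up f) p)
  | fSAll p => fSAll (ren_form f p)
  | fSEx p => fSEx (ren_form f p)
  end.

Lemma isSigma00_ren f phi : isSigma00 phi -> isSigma00 (ren_form f phi).
Proof. revert f; induction phi; simpl; intros; firstorder. Qed.

Section Renaming.
Variable M : L2str.

Lemma eval_ren f rho rho' t : (forall n, rho (f n) = rho' n) ->
  eval M rho (ren_term f t) = eval M rho' t.
Proof. intros H; induction t; simpl; congruence. Qed.

Lemma sat_ren phi : forall f rho rho' sigma, (forall n, rho (f n) = rho' n) ->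
  sat M rho sigma (ren_form f phi) <-> sat M rho' sigma phi.
Proof.
  induction phi; intros f rho rho' sigma H; simpl; rewrite ?(eval_ren f rho rho' _ H);
    try (assert (Hup : forall a n, scons a rho (up f n) = scons a rho' n)
           by (intros a [|n]; simpl; auto));
    try (setoid_rewrite (IHphi f rho rho' _ H));
    try (setoid_rewrite (fun a => IHphi (up f) (scons a rho) (scons a rho') sigma (Hup a)));
    try (rewrite (IHphi1 f rho rho' sigma H), (IHphi2 f rho rho' sigma H));
    reflexivity.
Qed.

End Renaming.

(** * Delta0-definable predicates *)

Section Definability.
Variable M : L2str.
Notation N := (carrier M).

Fixpoint glue (d : nat) (env pi : nat -> N) : nat -> N :=
  match d with
  | 0 => pi
  | S d => scons (env 0) (glue d (fun n => env (S n)) pi)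
  end.

Lemma glue_lt d : forall env pi k, k < d -> glue d env pi k = env k.
Proof.
  induction d as [|d IH]; intros env pi [|k] Hk; simpl; try lia; auto.
  apply (IH (fun n => env (S n))); lia.
Qed.

Definition interleave (pi1 pi2 : nat -> N) : nat -> N :=
  fun n => if Nat.odd n then pi2 (Nat.div2 n) else pi1 (Nat.div2 n).

Fixpoint upn (d : nat) (f : nat -> nat) : nat -> nat :=
  match d with 0 => f | S d => up (upn d f) end.

Definition relocate (d : nat) (b : bool) : nat -> nat := upn d (fun n => 2 * n + Nat.b2n b).

Lemma glue_relocate d : forall b env pi1 pi2 n,
  glue d env (interleave pi1 pi2) (relocate d b n) = glue d env (if b then pi2 else pi1) n.
Proof.
  induction d as [|d IH]; intros b env pi1 pi2 n.
  - unfold interleave, relocate; destruct b; cbn [upn Nat.b2n glue].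
    + rewrite Nat.odd_odd, Nat.div2_odd'; reflexivity.
    + rewrite Nat.add_0_r, Nat.odd_even, Nat.div2_double; reflexivity.
  - destruct n as [|n]; [reflexivity|]. apply (IH b (fun n => env (S n))).
Qed.

Lemma glue_at d : forall env pi, glue d env pi d = pi 0.
Proof. induction d as [|d IH]; intros env pi; [reflexivity|]. apply (IH (fun n => env (S n))). Qed.

Lemma glue_weaken d : forall env pi n, glue (S d) env pi (upn d S n) = glue d env pi n.
Proof.
  induction d as [|d IH]; intros env pi n; [reflexivity|].
  destruct n as [|n]; [reflexivity|]. apply (IH (fun n => env (S n))).
Qed.

(* A term or predicate of depth d reads variables 0, ..., d-1 from the environment and
   all further variables from a fixed parameter sequence pi; parameter sequences of two
   definitions are merged by interleaving them, after relocating their variables. *)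
Definition term_definable (d : nat) (f : (nat -> N) -> N) : Prop :=
  exists t pi, forall env, eval M (glue d env pi) t = f env.

Definition delta0 (sigma : nat -> N -> Prop) (d : nat) (P : (nat -> N) -> Prop) : Prop :=
  exists phi pi, isSigma00 phi /\ forall env, sat M (glue d env pi) sigma phi <-> P env.

Lemma eval_relocate d b t env pi1 pi2 :
  eval M (glue d env (interleave pi1 pi2)) (ren_term (relocate d b) t)
  = eval M (glue d env (if b then pi2 else pi1)) t.
Proof. apply eval_ren; intros; apply glue_relocate. Qed.

Lemma sat_relocate d b phi env pi1 pi2 sigma :
  sat M (glue d env (interleave pi1 pi2)) sigma (ren_form (relocate d b) phi)
  <-> sat M (glue d env (if b then pi2 else pi1)) sigma phi.
Proof. apply sat_ren; intros; apply glue_relocate. Qed.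


Lemma term_definable_const d c : term_definable d (fun _ => c).
Proof.
  exists (tvar d), (fun _ => c); intros env; apply glue_at.
Qed.

Lemma term_definable_var d k : k < d -> term_definable d (fun env => env k).
Proof. intros Hk; exists (tvar k), (fun _ => zero M); intros env; apply glue_lt, Hk. Qed.

Lemma term_definable_add d f g : term_definable d f -> term_definable d g ->
  term_definable d (fun env => add M (f env) (g env)).
Proof.
  intros [t1 [pi1 H1]] [t2 [pi2 H2]].
  exists (tadd (ren_term (relocate d false) t1) (ren_term (relocate d true) t2)), (interleave pi1 pi2).
  intros env; cbn [eval]; rewrite !eval_relocate, H1, H2; reflexivity.
Qed.

Lemma term_definable_mul d f g : term_definable d f -> term_definable d g ->
  term_definable d (fun env => mul M (f env) (g env)).
Proof.
  intros [t1 [pi1 H1]] [t2 [pi2 H2]].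
  exists (tmul (ren_term (relocate d false) t1) (ren_term (relocate d true) t2)), (interleave pi1 pi2).
  intros env; cbn [eval]; rewrite !eval_relocate, H1, H2; reflexivity.
Qed.

Lemma term_definable_shift d f : term_definable d f ->
  term_definable (S d) (fun env => f (fun n => env (S n))).
Proof.
  intros [t [pi H]]; exists (ren_term S t), pi; intros env.
  rewrite <- H; apply eval_ren; reflexivity.
Qed.

Section Delta0.
Variable sigma : nat -> N -> Prop.

Lemma delta0_ext d P Q : (forall env, P env <-> Q env) -> delta0 sigma d P -> delta0 sigma d Q.
Proof. intros HPQ [phi [pi [Hphi H]]]; exists phi, pi; split; [auto|]; intros env; rewrite H; apply HPQ. Qed.

Lemma delta0_eq d f g : term_definable d f -> term_definable d g ->
  delta0 sigma d (fun env => f env = g env).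
Proof.
  intros [t1 [pi1 H1]] [t2 [pi2 H2]].
  exists (fEq (ren_term (relocate d false) t1) (ren_term (relocate d true) t2)), (interleave pi1 pi2).
  split; [exact I|]; intros env; cbn [sat]; rewrite !eval_relocate, H1, H2; reflexivity.
Qed.

Lemma delta0_lt d f g : term_definable d f -> term_definable d g ->
  delta0 sigma d (fun env => lt M (f env) (g env)).
Proof.
  intros [t1 [pi1 H1]] [t2 [pi2 H2]].
  exists (fLt (ren_term (relocate d false) t1) (ren_term (relocate d true) t2)), (interleave pi1 pi2).
  split; [exact I|]; intros env; cbn [sat]; rewrite !eval_relocate, H1, H2; reflexivity.
Qed.

Lemma delta0_mem d i X f : sigma i = X -> term_definable d f -> delta0 sigma d (fun env => X (f env)).
Proof.
  intros <- [t [pi H]]; exists (fMem t i), pi; split; [exact I|].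
  intros env; cbn [sat]; rewrite H; reflexivity.
Qed.

Lemma delta0_neg d P : delta0 sigma d P -> delta0 sigma d (fun env => ~ P env).
Proof.
  intros [phi [pi [Hphi H]]]; exists (fNeg phi), pi; split; [exact Hphi|].
  intros env; cbn [sat]; rewrite H; reflexivity.
Qed.

Lemma delta0_and d P Q : delta0 sigma d P -> delta0 sigma d Q -> delta0 sigma d (fun env => P env /\ Q env).
Proof.
  intros [phi1 [pi1 [Hphi1 H1]]] [phi2 [pi2 [Hphi2 H2]]].
  exists (fAnd (ren_form (relocate d false) phi1) (ren_form (relocate d true) phi2)), (interleave pi1 pi2).
  split; [split; apply isSigma00_ren; assumption|].
  intros env; cbn [sat]; rewrite !sat_relocate, H1, H2; reflexivity.
Qed.

Lemma delta0_or d P Q : delta0 sigma d P -> delta0 sigma d Q -> delta0 sigma d (fun env => P env \/ Q env).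
Proof.
  intros [phi1 [pi1 [Hphi1 H1]]] [phi2 [pi2 [Hphi2 H2]]].
  exists (fOr (ren_form (relocate d false) phi1) (ren_form (relocate d true) phi2)), (interleave pi1 pi2).
  split; [split; apply isSigma00_ren; assumption|].
  intros env; cbn [sat]; rewrite !sat_relocate, H1, H2; reflexivity.
Qed.

Lemma delta0_imp d P Q : delta0 sigma d P -> delta0 sigma d Q -> delta0 sigma d (fun env => P env -> Q env).
Proof.
  intros [phi1 [pi1 [Hphi1 H1]]] [phi2 [pi2 [Hphi2 H2]]].
  exists (fImp (ren_form (relocate d false) phi1) (ren_form (relocate d true) phi2)), (interleave pi1 pi2).
  split; [split; apply isSigma00_ren; assumption|].
  intros env; cbn [sat]; rewrite !sat_relocate, H1, H2; reflexivity.
Qed.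

Lemma delta0_ball d f P : term_definable d f ->
  delta0 sigma (S d) (fun env => P (env 0) (fun n => env (S n))) ->
  delta0 sigma d (fun env => forall a, lt M a (f env) -> P a env).
Proof.
  intros [t [pi1 H1]] [phi [pi2 [Hphi H2]]].
  exists (fBAll (ren_term (relocate d false) t) (ren_form (relocate (S d) true) phi)), (interleave pi1 pi2).
  split; [apply isSigma00_ren; assumption|].
  intros env; cbn [sat]; rewrite eval_relocate, H1.
  setoid_rewrite (fun a => sat_relocate (S d) true phi (scons a env) pi1 pi2 sigma).
  setoid_rewrite H2; reflexivity.
Qed.

Lemma delta0_bex d f P : term_definable d f ->
  delta0 sigma (S d) (fun env => P (env 0) (fun n => env (S n))) ->
  delta0 sigma d (fun env => exists a, lt M a (f env) /\ P a env).
Proof.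
  intros [t [pi1 H1]] [phi [pi2 [Hphi H2]]].
  exists (fBEx (ren_term (relocate d false) t) (ren_form (relocate (S d) true) phi)), (interleave pi1 pi2).
  split; [apply isSigma00_ren; assumption|].
  intros env; cbn [sat]; rewrite eval_relocate, H1.
  setoid_rewrite (fun a => sat_relocate (S d) true phi (scons a env) pi1 pi2 sigma).
  setoid_rewrite H2; reflexivity.
Qed.

Lemma delta0_weaken d P : delta0 sigma d P -> delta0 sigma (S d) P.
Proof.
  intros [phi [pi [Hphi H]]]; exists (ren_form (upn d S) phi), pi; split; [apply isSigma00_ren, Hphi|].
  intros env; rewrite <- H; apply sat_ren; intros; apply glue_weaken.
Qed.

Lemma delta0_shift d P : delta0 sigma d P -> delta0 sigma (S d) (fun env => P (fun n => env (S n))).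
Proof.
  intros [phi [pi [Hphi H]]]; exists (ren_form S phi), pi; split; [apply isSigma00_ren, Hphi|].
  intros env; rewrite <- H; apply sat_ren; reflexivity.
Qed.

End Delta0.
End Definability.

(* Extended below by atoms whose bounded form needs arithmetic. *)
Ltac delta0_atom := fail.

Ltac delta0 :=
  repeat (cbn beta; first
    [ delta0_atom
    | apply delta0_ball | apply delta0_bex
    | apply delta0_neg | apply delta0_and | apply delta0_or | apply delta0_imp
    | apply delta0_eq | apply delta0_lt
    | apply (delta0_mem _ _ _ 0); [reflexivity|]
    | apply term_definable_const
    | apply term_definable_var; lia
    | apply term_definable_add | apply term_definable_mul ]).

Definition sigma2_induction (M : L2str) (sigma : nat -> carrier M -> Prop) : Prop :=
  forall Q : carrier M -> carrier M -> carrier M -> Prop,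
    delta0 M sigma 3 (fun env => Q (env 2) (env 1) (env 0)) ->
    (exists b, forall x, Q (zero M) b x) ->
    (forall a, (exists b, forall x, Q a b x) -> exists b, forall x, Q (add M a (one M)) b x) ->
    forall a, exists b, forall x, Q a b x.

(** * Arithmetic in models of RCA0 *)

Section Model.
Variable M : L2str.
Hypothesis HM : RCA0 M.

Notation N := (carrier M).
Notation "a ⊕ b" := (add M a b) (at level 50, left associativity).
Notation "a ⊗ b" := (mul M a b) (at level 40, left associativity).
Notation "a ≺ b" := (lt M a b) (at level 70).
Notation "a ≼ b" := (lt M a (add M b (one M))) (at level 70).
Notation "𝟘" := (zero M).
Notation "𝟙" := (one M).

Lemma succ_neq_zero n : n ⊕ 𝟙 <> 𝟘. Proof. apply HM. Qed.
Lemma succ_inj m n : m ⊕ 𝟙 = n ⊕ 𝟙 -> m = n. Proof. apply HM. Qed.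
Lemma add_0_r m : m ⊕ 𝟘 = m. Proof. apply HM. Qed.
Lemma add_succ_r m n : m ⊕ (n ⊕ 𝟙) = m ⊕ n ⊕ 𝟙. Proof. apply HM. Qed.
Lemma mul_0_r m : m ⊗ 𝟘 = 𝟘. Proof. apply HM. Qed.
Lemma mul_succ_r m n : m ⊗ (n ⊕ 𝟙) = m ⊗ n ⊕ m. Proof. apply HM. Qed.
Lemma nlt_0_r m : ~ m ≺ 𝟘. Proof. apply HM. Qed.
Lemma le_lteq m n : m ≼ n <-> m ≺ n \/ m = n. Proof. apply HM. Qed.

Section Induction.
Variable sigma : nat -> N -> Prop.
Hypothesis sigma_sets : set_env M sigma.

Lemma sigma1_induction (Q : N -> N -> Prop) : delta0 M sigma 2 (fun env => Q (env 1) (env 0)) ->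
  (exists b, Q 𝟘 b) -> (forall a, (exists b, Q a b) -> exists b, Q (a ⊕ 𝟙) b) ->
  forall a, exists b, Q a b.
Proof.
  intros [phi [pi [Hphi H]]] H0 HS.
  assert (E : forall a, sat M (scons a pi) sigma (fEx phi) <-> exists b, Q a b)
    by (intros a; split; intros [b Hb]; exists b; apply (H (scons b (scons a pi))), Hb).
  destruct HM as [_ [Hind _]].
  intros a; apply E, (Hind (fEx phi) Hphi pi sigma sigma_sets); [apply E, H0|].
  intros c Hc; apply E, HS, E, Hc.
Qed.

Lemma delta0_induction (Q : N -> Prop) : delta0 M sigma 1 (fun env => Q (env 0)) ->
  Q 𝟘 -> (forall a, Q a -> Q (a ⊕ 𝟙)) -> forall a, Q a.
Proof.
  intros HQ H0 HS a.
  destruct (sigma1_induction (fun a _ => Q a) (delta0_shift _ _ _ _ HQ)) with a as [_ Ha];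
    [exists 𝟘; exact H0 | intros c [_ Hc]; exists 𝟘; apply HS, Hc | exact Ha].
Qed.

Lemma delta0_comprehension (Q : N -> Prop) : delta0 M sigma 1 (fun env => Q (env 0)) ->
  exists X, sets M X /\ forall a, X a <-> Q a.
Proof.
  intros HQ; destruct (delta0_shift _ _ _ _ HQ) as [phi [pi [Hphi H]]].
  assert (Eex : forall a, sat M (scons a pi) sigma (fEx phi) <-> Q a).
  { intros a; split; [intros [b Hb]; apply (H (scons b (scons a pi))), Hb|].
    intros Ha; exists a; apply (H (scons a (scons a pi))), Ha. }
  assert (Eall : forall a, sat M (scons a pi) sigma (fAll phi) <-> Q a).
  { intros a; split; [intros Hb; apply (H (scons a (scons a pi))), Hb|].
    intros Ha b; apply (H (scons b (scons a pi))), Ha. }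
  destruct HM as [_ [_ HCA]].
  destruct (HCA (fEx phi) (fAll phi) Hphi Hphi pi sigma sigma_sets) as [X [HX HXa]].
  - intros a; rewrite Eex, Eall; reflexivity.
  - exists X; split; [exact HX|]; intros a; rewrite HXa; apply Eex.
Qed.

Lemma delta0_least (Q : N -> Prop) : delta0 M sigma 1 (fun env => Q (env 0)) ->
  forall n, Q n -> exists m, Q m /\ forall k, k ≺ m -> ~ Q k.
Proof.
  intros HQ n Hn; apply NNPP; intros Hnone.
  assert (Hbelow : forall a k, k ≺ a -> ~ Q k).
  { apply (delta0_induction (fun a => forall k, k ≺ a -> ~ Q k)).
    - apply delta0_ball; [apply term_definable_var; lia | apply delta0_neg, delta0_weaken, HQ].
    - intros k Hk; destruct (nlt_0_r k Hk).
    - intros a IH k Hk Qk; apply le_lteq in Hk as [Hk | ->]; [exact (IH k Hk Qk)|].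
      apply Hnone; exists a; split; assumption. }
  apply (Hbelow (n ⊕ 𝟙) n); [apply le_lteq; right; reflexivity | exact Hn].
Qed.

End Induction.

(* RCA0 grants induction only relative to an environment of sets. *)
Variable sigma0 : nat -> N -> Prop.
Hypothesis sigma0_sets : set_env M sigma0.

Ltac delta0_ind :=
  match goal with |- forall a, @?Q a => apply (delta0_induction _ sigma0_sets Q); [delta0 | |] end.

Lemma add_0_l n : 𝟘 ⊕ n = n.
Proof. revert n; delta0_ind; [apply add_0_r | intros n IH; rewrite add_succ_r, IH; reflexivity]. Qed.

Lemma add_succ_l m n : m ⊕ 𝟙 ⊕ n = m ⊕ n ⊕ 𝟙.
Proof.
  revert n; delta0_ind; [rewrite !add_0_r; reflexivity|].
  intros n IH; rewrite !add_succ_r, IH; reflexivity.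
Qed.

Lemma add_comm m n : m ⊕ n = n ⊕ m.
Proof.
  revert n; delta0_ind; [rewrite add_0_r, add_0_l; reflexivity|].
  intros n IH; rewrite add_succ_r, IH, add_succ_l; reflexivity.
Qed.

Lemma add_assoc a b c : a ⊕ b ⊕ c = a ⊕ (b ⊕ c).
Proof.
  revert c; delta0_ind; [rewrite !add_0_r; reflexivity|].
  intros c IH; rewrite !add_succ_r, IH; reflexivity.
Qed.

Lemma mul_0_l n : 𝟘 ⊗ n = 𝟘.
Proof. revert n; delta0_ind; [apply mul_0_r | intros n IH; rewrite mul_succ_r, IH, add_0_r; reflexivity]. Qed.

Lemma mul_succ_l m n : (m ⊕ 𝟙) ⊗ n = m ⊗ n ⊕ n.
Proof.
  revert n; delta0_ind; [rewrite !mul_0_r, add_0_r; reflexivity|].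
  intros n IH; rewrite !mul_succ_r, IH, !add_succ_r; f_equal.
  rewrite !add_assoc, (add_comm n m); reflexivity.
Qed.

Lemma mul_comm m n : m ⊗ n = n ⊗ m.
Proof.
  revert n; delta0_ind; [rewrite mul_0_r, mul_0_l; reflexivity|].
  intros n IH; rewrite mul_succ_r, IH, mul_succ_l; reflexivity.
Qed.

Lemma mul_add_distr_l a b c : a ⊗ (b ⊕ c) = a ⊗ b ⊕ a ⊗ c.
Proof.
  revert c; delta0_ind; [rewrite add_0_r, mul_0_r, add_0_r; reflexivity|].
  intros c IH; rewrite add_succ_r, !mul_succ_r, IH, add_assoc; reflexivity.
Qed.

Lemma mul_assoc a b c : a ⊗ b ⊗ c = a ⊗ (b ⊗ c).
Proof.
  revert c; delta0_ind; [rewrite !mul_0_r; reflexivity|].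
  intros c IH; rewrite !mul_succ_r, IH, mul_add_distr_l; reflexivity.
Qed.

Lemma mul_1_l n : 𝟙 ⊗ n = n.
Proof. rewrite mul_comm, <- (add_0_l 𝟙), mul_succ_r, mul_0_r, add_0_l; reflexivity. Qed.

Lemma model_semiring : semi_ring_theory 𝟘 𝟙 (add M) (mul M) (@eq N).
Proof.
  constructor; intros; rewrite ?add_0_l, ?mul_1_l, ?mul_0_l, ?add_assoc, ?mul_assoc;
    auto using add_comm, mul_comm.
  rewrite mul_comm, mul_add_distr_l, !(mul_comm p); reflexivity.
Qed.

Add Ring model_ring : model_semiring.

Lemma add_cancel_l a x y : a ⊕ x = a ⊕ y -> x = y.
Proof.
  revert a; delta0_ind; [rewrite !add_0_l; auto|].
  intros a IH H; apply IH, succ_inj; rewrite <- !add_succ_l; exact H.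
Qed.

Lemma add_cancel_r a x y : x ⊕ a = y ⊕ a -> x = y.
Proof. rewrite !(add_comm _ a); apply add_cancel_l. Qed.

Lemma lt_add_succ a d : a ≺ a ⊕ d ⊕ 𝟙.
Proof.
  revert d; delta0_ind; [rewrite add_0_r; apply le_lteq; auto|].
  intros d IH; apply le_lteq; left; rewrite add_succ_r; exact IH.
Qed.

Lemma lt_iff_add a b : a ≺ b <-> exists d, b = a ⊕ d ⊕ 𝟙.
Proof.
  split; [|intros [d ->]; apply lt_add_succ].
  assert (H : forall b, exists d, a ≺ b -> b = a ⊕ d ⊕ 𝟙).
  { apply (sigma1_induction _ sigma0_sets (fun b d => a ≺ b -> b = a ⊕ d ⊕ 𝟙)); [delta0| |].
    - exists 𝟘; intros H; destruct (nlt_0_r a H).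
    - intros c [d Hd]; destruct (classic (a ≺ c)) as [H|H].
      + exists (d ⊕ 𝟙); intros _; rewrite (Hd H); ring.
      + exists 𝟘; intros Hc; apply le_lteq in Hc as [Hc | ->]; [contradiction | ring]. }
  intros Hab; destruct (H b) as [d Hd]; exists d; exact (Hd Hab).
Qed.

Lemma le_iff_add a b : a ≼ b <-> exists d, b = a ⊕ d.
Proof.
  rewrite lt_iff_add; split; intros [d Hd]; exists d;
    [apply (add_cancel_r 𝟙); rewrite Hd | rewrite Hd]; ring.
Qed.

Lemma lt_irrefl a : ~ a ≺ a.
Proof.
  intros H; apply lt_iff_add in H as [d Hd].
  apply (succ_neq_zero d), (add_cancel_l a); rewrite add_0_r, add_succ_r; symmetry; exact Hd.
Qed.

Lemma lt_trans a b c : a ≺ b -> b ≺ c -> a ≺ c.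
Proof.
  intros Hab Hbc; apply lt_iff_add in Hab as [d ->], Hbc as [e ->].
  apply lt_iff_add; exists (d ⊕ e ⊕ 𝟙); ring.
Qed.

Lemma lt_succ_diag_r n : n ≺ n ⊕ 𝟙.
Proof. apply le_lteq; right; reflexivity. Qed.

Lemma lt_0_succ n : 𝟘 ≺ n ⊕ 𝟙.
Proof. apply lt_iff_add; exists n; ring. Qed.

Lemma lt_0_1 : 𝟘 ≺ 𝟙.
Proof. rewrite <- (add_0_l 𝟙); apply lt_0_succ. Qed.

Lemma zero_or_pos n : n = 𝟘 \/ 𝟘 ≺ n.
Proof. revert n; delta0_ind; [left; reflexivity | intros n _; right; apply lt_0_succ]. Qed.

Lemma pos_succ n : 𝟘 ≺ n -> exists m, n = m ⊕ 𝟙.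
Proof. intros H; apply lt_iff_add in H as [m ->]; exists m; ring. Qed.

Lemma lt_trichotomy m n : m ≺ n \/ m = n \/ n ≺ m.
Proof.
  revert n; delta0_ind.
  - destruct (zero_or_pos m) as [-> | H]; auto.
  - intros n [H | [-> | H]]; [left; apply le_lteq; auto | left; apply lt_succ_diag_r|].
    apply lt_iff_add in H as [d ->]; destruct (zero_or_pos d) as [-> | Hd].
    + right; left; ring.
    + destruct (pos_succ d Hd) as [e ->]; right; right; apply lt_iff_add; exists e; ring.
Qed.

Lemma le_refl a : a ≼ a.
Proof. apply lt_succ_diag_r. Qed.

Lemma lt_le_incl a b : a ≺ b -> a ≼ b.
Proof. intros H; apply le_lteq; auto. Qed.

Lemma le_trans a b c : a ≼ b -> b ≼ c -> a ≼ c.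
Proof.
  intros Hab Hbc; apply le_iff_add in Hab as [d ->], Hbc as [e ->].
  apply le_iff_add; exists (d ⊕ e); ring.
Qed.

Lemma lt_le_trans a b c : a ≺ b -> b ≼ c -> a ≺ c.
Proof. intros H1 H2; apply le_lteq in H2 as [H2 | <-]; [exact (lt_trans _ _ _ H1 H2) | exact H1]. Qed.

Lemma le_lt_trans a b c : a ≼ b -> b ≺ c -> a ≺ c.
Proof. intros H1 H2; apply le_lteq in H1 as [H1 | ->]; [exact (lt_trans _ _ _ H1 H2) | exact H2]. Qed.

Lemma le_succ_l a b : a ⊕ 𝟙 ≼ b <-> a ≺ b.
Proof. rewrite le_iff_add, lt_iff_add; split; intros [d ->]; exists d; ring. Qed.

Lemma nle_gt a b : ~ a ≼ b -> b ≺ a.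
Proof.
  intros H; destruct (lt_trichotomy a b) as [? | [-> | ?]]; [| destruct (H (le_refl b)) | assumption].
  destruct (H (lt_le_incl _ _ H0)).
Qed.

Lemma le_add_r a b : a ≼ a ⊕ b.
Proof. apply le_iff_add; exists b; reflexivity. Qed.

Lemma le_0_l a : 𝟘 ≼ a.
Proof. apply le_iff_add; exists a; ring. Qed.

Lemma add_lt_mono_r a b c : a ≺ b -> a ⊕ c ≺ b ⊕ c.
Proof. intros H; apply lt_iff_add in H as [d ->]; apply lt_iff_add; exists d; ring. Qed.

Lemma mul_lt_mono_pos_l a x y : 𝟘 ≺ a -> x ≺ y -> a ⊗ x ≺ a ⊗ y.
Proof.
  intros Ha Hxy; destruct (pos_succ a Ha) as [a' ->]; apply lt_iff_add in Hxy as [d ->].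
  apply lt_iff_add; exists ((a' ⊕ 𝟙) ⊗ d ⊕ a'); ring.
Qed.

Lemma mul_pos a b : 𝟘 ≺ a -> 𝟘 ≺ b -> 𝟘 ≺ a ⊗ b.
Proof.
  intros Ha Hb; destruct (pos_succ a Ha) as [c ->], (pos_succ b Hb) as [d ->].
  apply lt_iff_add; exists (c ⊗ d ⊕ c ⊕ d); ring.
Qed.

Definition Dvd (a b : N) : Prop := exists e, b = a ⊗ e.

Lemma dvd_refl a : Dvd a a.
Proof. exists 𝟙; ring. Qed.

Lemma dvd_1_l a : Dvd 𝟙 a.
Proof. exists a; ring. Qed.

Lemma dvd_trans a b c : Dvd a b -> Dvd b c -> Dvd a c.
Proof. intros [x ->] [y ->]; exists (x ⊗ y); ring. Qed.

Lemma dvd_mul_r a b c : Dvd a b -> Dvd a (b ⊗ c).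
Proof. intros [x ->]; exists (x ⊗ c); ring. Qed.

Lemma dvd_mul_l a b c : Dvd a b -> Dvd a (c ⊗ b).
Proof. intros [x ->]; exists (x ⊗ c); ring. Qed.

Lemma dvd_pos a b : Dvd a b -> 𝟘 ≺ b -> 𝟘 ≺ a.
Proof.
  intros [e ->] Hb; destruct (zero_or_pos a) as [-> | Ha]; [|exact Ha].
  rewrite mul_0_l in Hb; destruct (lt_irrefl _ Hb).
Qed.

Lemma dvd_le a b : Dvd a b -> 𝟘 ≺ b -> a ≼ b.
Proof.
  intros [e ->] Hb; destruct (zero_or_pos e) as [-> | He];
    [rewrite mul_0_r in Hb; destruct (lt_irrefl _ Hb)|].
  destruct (pos_succ e He) as [e' ->]; apply le_iff_add; exists (a ⊗ e'); ring.
Qed.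

Lemma dvd_1_r a : Dvd a 𝟙 -> a = 𝟙.
Proof.
  intros Ha; destruct (proj1 (le_lteq _ _) (dvd_le _ _ Ha lt_0_1)) as [H | ->]; [|reflexivity].
  rewrite <- (add_0_l 𝟙) in H; apply le_lteq in H as [H | ->]; [destruct (nlt_0_r _ H)|].
  destruct Ha as [e He]; rewrite mul_0_l in He; destruct (lt_irrefl 𝟘); rewrite <- He at 2; exact lt_0_1.
Qed.

Lemma dvd_add_cancel_r a b c : Dvd a b -> Dvd a (b ⊕ c) -> Dvd a c.
Proof.
  intros [x ->] [y Hy]; destruct (zero_or_pos a) as [-> | Ha].
  - exists 𝟘; rewrite !mul_0_l, add_0_l in Hy; rewrite Hy; ring.
  - destruct (lt_trichotomy y x) as [Hyx | Hxy].
    + destruct (lt_irrefl (a ⊗ y)); apply (lt_le_trans _ (a ⊗ x)); [apply mul_lt_mono_pos_l; assumption|].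
      rewrite <- Hy; apply le_add_r.
    + assert (Hle : x ≼ y) by (destruct Hxy as [-> | ?]; [apply le_refl | apply lt_le_incl; assumption]).
      apply le_iff_add in Hle as [w ->]; exists w; apply (add_cancel_l (a ⊗ x)); rewrite Hy; ring.
Qed.

Lemma delta0_dvd sigma d f g : term_definable M d f -> term_definable M d g ->
  delta0 M sigma d (fun env => Dvd (f env) (g env)).
Proof.
  intros Hf Hg; apply (delta0_ext _ _ _ (fun env => exists e, e ≼ g env /\ g env = f env ⊗ e)).
  - intros env; split; [intros [e [_ He]]; exists e; exact He|].
    intros [e He]; destruct (zero_or_pos (g env)) as [H0 | Hpos].
    + exists 𝟘; rewrite H0; split; [apply le_refl | ring].
    + exists e; split; [apply dvd_le; [exists (f env); rewrite He; ring | exact Hpos] | exact He].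
  - apply delta0_bex; [apply term_definable_add; [exact Hg | apply term_definable_const]|].
    apply delta0_eq; [apply term_definable_shift, Hg|].
    apply term_definable_mul; [apply term_definable_shift, Hf | apply term_definable_var; lia].
Qed.

Ltac delta0_atom ::= apply delta0_dvd.

Lemma div_mod d a : 𝟘 ≺ d -> exists q r, r ≺ d /\ a = q ⊗ d ⊕ r.
Proof.
  intros Hd; revert a.
  apply (sigma1_induction _ sigma0_sets (fun a q => exists r, r ≺ d /\ a = q ⊗ d ⊕ r)); [delta0| |].
  - exists 𝟘, 𝟘; split; [exact Hd | ring].
  - intros a [q [r [Hr ->]]]; rewrite <- le_succ_l, le_lteq in Hr; destruct Hr as [Hr | Hr].
    + exists q, (r ⊕ 𝟙); split; [exact Hr | ring].
    + exists (q ⊕ 𝟙), 𝟘; split; [exact Hd | rewrite <- Hr; ring].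
Qed.

Definition Coprime (a b : N) : Prop := forall g, g ≼ a -> Dvd g a -> Dvd g b -> g = 𝟙.

Lemma gauss a b c : 𝟘 ≺ a -> Coprime a b -> Dvd a (b ⊗ c) -> Dvd a c.
Proof.
  intros Ha Hab Habc.
  destruct (delta0_least _ sigma0_sets (fun d => 𝟘 ≺ d /\ Dvd a (d ⊗ c))) with a
    as [m [[Hm Hmc] Hmin]];
    [delta0 | split; [exact Ha | apply dvd_mul_r, dvd_refl]|].
  assert (Hdiv : forall x, Dvd a (x ⊗ c) -> Dvd m x).
  { intros x Hx; destruct (div_mod m x Hm) as [q [r [Hr ->]]].
    destruct (zero_or_pos r) as [-> | Hr0]; [exists q; ring|].
    exfalso; apply (Hmin r Hr); split; [exact Hr0|].
    apply (dvd_add_cancel_r _ (q ⊗ (m ⊗ c))); [apply dvd_mul_l, Hmc|].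
    replace (q ⊗ (m ⊗ c) ⊕ r ⊗ c) with ((q ⊗ m ⊕ r) ⊗ c) by ring; exact Hx. }
  assert (Hm1 : m = 𝟙).
  { assert (Hma : Dvd m a) by (apply Hdiv, dvd_mul_r, dvd_refl).
    apply Hab; [exact (dvd_le _ _ Hma Ha) | exact Hma | apply Hdiv, Habc]. }
  rewrite Hm1, mul_1_l in Hmc; exact Hmc.
Qed.

Lemma pair_lt x y u v : x ⊕ y ≺ u ⊕ v -> pair M x y ≺ pair M u v.
Proof.
  intros H; apply lt_iff_add in H as [d Hd]; apply lt_iff_add; unfold pair; rewrite Hd.
  exists (x ⊗ (d ⊕ d ⊕ 𝟙) ⊕ y ⊗ (d ⊕ d ⊕ 𝟙 ⊕ 𝟙) ⊕ d ⊗ d ⊕ d ⊕ d ⊕ u); ring.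
Qed.

Lemma pair_inj x y u v : pair M x y = pair M u v -> x = u /\ y = v.
Proof.
  intros H; destruct (lt_trichotomy (x ⊕ y) (u ⊕ v)) as [Hlt | [Heq | Hlt]].
  - apply pair_lt in Hlt; rewrite H in Hlt; destruct (lt_irrefl _ Hlt).
  - unfold pair in H; rewrite Heq in H; apply add_cancel_l in H as ->.
    split; [reflexivity | exact (add_cancel_l _ _ _ Heq)].
  - apply pair_lt in Hlt; rewrite H in Hlt; destruct (lt_irrefl _ Hlt).
Qed.

Lemma le_pair_l x y : x ≼ pair M x y.
Proof. apply le_iff_add; exists ((x ⊕ y) ⊗ (x ⊕ y)); unfold pair; ring. Qed.

Lemma le_pair_r x y : y ≼ pair M x y.
Proof.
  apply (le_trans _ (x ⊕ y)); [apply le_iff_add; exists x; ring|].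
  unfold pair; destruct (zero_or_pos (x ⊕ y)) as [-> | Hs];
    [apply le_iff_add; exists (𝟘 ⊗ 𝟘 ⊕ x); ring|].
  destruct (pos_succ _ Hs) as [t ->]; apply le_iff_add; exists ((t ⊕ 𝟙) ⊗ t ⊕ x); ring.
Qed.

Lemma pair_lt_mono_l t u c : t ≺ u -> pair M t c ≺ pair M u c.
Proof. intros H; apply pair_lt, add_lt_mono_r, H. Qed.

Definition triple (a b x : N) : N := pair M a (pair M b x).

(** * ISigma02 implies SPP *)

Definition modulus (m i : N) : N := (i ⊕ 𝟙) ⊗ m ⊕ 𝟙.

Lemma exists_common_multiple k : exists m, 𝟘 ≺ m /\ forall d, d ≺ k -> Dvd (d ⊕ 𝟙) m.
Proof.
  revert k; apply (sigma1_induction _ sigma0_sets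
    (fun k m => 𝟘 ≺ m /\ forall d, d ≺ k -> Dvd (d ⊕ 𝟙) m)); [delta0| |].
  - exists 𝟙; split; [exact lt_0_1 | intros d Hd; destruct (nlt_0_r _ Hd)].
  - intros k [m [Hm Hmk]]; exists (m ⊗ (k ⊕ 𝟙)); split; [apply mul_pos; [exact Hm | apply lt_0_succ]|].
    intros d Hd; apply le_lteq in Hd as [Hd | ->]; [apply dvd_mul_r, Hmk, Hd | apply dvd_mul_l, dvd_refl].
Qed.

Lemma exists_moduli_multiple m k : exists Q, 𝟘 ≺ Q /\ forall i, i ≺ k -> Dvd (modulus m i) Q.
Proof.
  revert k; apply (sigma1_induction _ sigma0_sets
    (fun k Q => 𝟘 ≺ Q /\ forall i, i ≺ k -> Dvd (modulus m i) Q)); [unfold modulus; delta0| |].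
  - exists 𝟙; split; [exact lt_0_1 | intros d Hd; destruct (nlt_0_r _ Hd)].
  - intros k [Q [HQ HQk]]; exists (Q ⊗ modulus m k); split; [apply mul_pos; [exact HQ | apply lt_0_succ]|].
    intros i Hi; apply le_lteq in Hi as [Hi | ->]; [apply dvd_mul_r, HQk, Hi | apply dvd_mul_l, dvd_refl].
Qed.

Section Codes.
Variables k m Q : N.
Hypothesis m_pos : 𝟘 ≺ m.
Hypothesis m_multiple : forall d, d ≺ k -> Dvd (d ⊕ 𝟙) m.
Hypothesis Q_pos : 𝟘 ≺ Q.
Hypothesis Q_multiple : forall i, i ≺ k -> Dvd (modulus m i) Q.

Lemma modulus_neq_1 i : modulus m i <> 𝟙.
Proof.
  unfold modulus; intros H.
  assert (E : (i ⊕ 𝟙) ⊗ m = 𝟘) by (apply (add_cancel_r 𝟙); rewrite add_0_l; exact H).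
  apply (lt_irrefl 𝟘); rewrite <- E at 2; apply mul_pos; [apply lt_0_succ | exact m_pos].
Qed.

(* A common divisor of q_i and q_j divides (j+1) q_i - (i+1) q_j = j - i, a divisor of m,
   hence also q_i - (i+1) m = 1. *)
Lemma moduli_coprime_lt i j g : i ≺ j -> j ≺ k ->
  Dvd g (modulus m i) -> Dvd g (modulus m j) -> g = 𝟙.
Proof.
  intros Hij Hjk Hgi Hgj; apply lt_iff_add in Hij as [e ->].
  assert (He : Dvd (e ⊕ 𝟙) m).
  { apply m_multiple, (le_lt_trans _ (i ⊕ e ⊕ 𝟙)); [|exact Hjk].
    apply le_iff_add; exists (i ⊕ 𝟙); ring. }
  assert (Hg : Dvd g (e ⊕ 𝟙)).
  { apply (dvd_add_cancel_r _ ((i ⊕ 𝟙) ⊗ modulus m (i ⊕ e ⊕ 𝟙))); [apply dvd_mul_l, Hgj|].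
    replace ((i ⊕ 𝟙) ⊗ modulus m (i ⊕ e ⊕ 𝟙) ⊕ (e ⊕ 𝟙))
      with ((i ⊕ e ⊕ 𝟙 ⊕ 𝟙) ⊗ modulus m i)
      by (unfold modulus; ring).
    apply dvd_mul_l, Hgi. }
  apply dvd_1_r, (dvd_add_cancel_r _ ((i ⊕ 𝟙) ⊗ m));
    [apply dvd_mul_l, (dvd_trans _ _ _ Hg He) | exact Hgi].
Qed.

Lemma moduli_coprime i j g : i ≺ k -> j ≺ k -> i <> j ->
  Dvd g (modulus m i) -> Dvd g (modulus m j) -> g = 𝟙.
Proof.
  intros Hi Hj Hij Hgi Hgj; destruct (lt_trichotomy i j) as [H | [H | H]];
    [exact (moduli_coprime_lt i j g H Hj Hgi Hgj) | contradiction
    | exact (moduli_coprime_lt j i g H Hi Hgj Hgi)].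
Qed.

Definition Code (s : N) : Prop :=
  Dvd s Q /\ forall i, i ≺ k -> Dvd (modulus m i) s \/ Coprime (modulus m i) s.

Lemma code_1 : Code 𝟙.
Proof. split; [apply dvd_1_l | intros i _; right; intros g _ _; apply dvd_1_r]. Qed.

Lemma code_le s : Code s -> s ≼ Q.
Proof. intros [Hs _]; exact (dvd_le _ _ Hs Q_pos). Qed.

Lemma coprime_dvd_l g a s : 𝟘 ≺ a -> Dvd g a -> Coprime a s -> Coprime g s.
Proof.
  intros Ha Hga Has h Hh Hhg Hhs; apply Has; [|exact (dvd_trans _ _ _ Hhg Hga) | exact Hhs].
  exact (le_trans _ _ _ (dvd_le _ _ (dvd_trans _ _ _ Hhg Hga) Ha) (le_refl a)).
Qed.

Lemma code_mul s i : Code s -> i ≺ k -> ~ Dvd (modulus m i) s -> Code (s ⊗ modulus m i).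
Proof.
  intros [[r Hr] Hs] Hi Hns.
  assert (Hcop : Coprime (modulus m i) s) by (destruct (Hs i Hi); [contradiction | assumption]).
  split.
  - destruct (gauss (modulus m i) s r (lt_0_succ _) Hcop) as [r' ->]; [rewrite <- Hr; apply Q_multiple, Hi|].
    exists r'; rewrite Hr; ring.
  - intros j Hj; destruct (classic (j = i)) as [-> | Hji]; [left; apply dvd_mul_l, dvd_refl|].
    destruct (Hs j Hj) as [H | H]; [left; apply dvd_mul_r, H | right].
    intros g Hg Hgj Hgs; apply (moduli_coprime j i g Hj Hi Hji Hgj).
    apply (gauss g s); [exact (dvd_pos _ _ Hgj (lt_0_succ _)) | | exact Hgs].
    exact (coprime_dvd_l g _ s (lt_0_succ _) Hgj H).
Qed.

Lemma code_mul_dvd s i j : Code s -> i ≺ k -> j ≺ k ->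
  Dvd (modulus m j) (s ⊗ modulus m i) -> j = i \/ Dvd (modulus m j) s.
Proof.
  intros [_ Hs] Hi Hj Hd; destruct (classic (j = i)) as [-> | Hji]; [left; reflexivity|].
  destruct (Hs j Hj) as [H | H]; [right; exact H|].
  destruct (modulus_neq_1 j); apply (moduli_coprime j i _ Hj Hi Hji (dvd_refl _)).
  exact (gauss _ _ _ (lt_0_succ _) H Hd).
Qed.

Variable C : N -> Prop.
Hypothesis C_induction : sigma2_induction M (fun _ => C).

Definition Dies (b i : N) : Prop := forall x, b ≼ x -> ~ C (pair M x i).

Definition DeadCode (s b : N) : Prop := Code s /\ forall i, i ≺ k -> Dvd (modulus m i) s -> Dies b i.

Lemma dies_mono b b' i : b ≼ b' -> Dies b i -> Dies b' i.
Proof. intros Hb H x Hx; apply H, (le_trans _ _ _ Hb Hx). Qed.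

Lemma dead_code_extend s b i b' : DeadCode s b -> i ≺ k -> ~ Dvd (modulus m i) s -> Dies b' i ->
  s ≺ s ⊗ modulus m i /\ DeadCode (s ⊗ modulus m i) (b ⊕ b').
Proof.
  intros [Hs Hdies] Hi Hns Hb'; split; [|split; [apply code_mul; assumption|]].
  - destruct Hs as [Hs _]; apply lt_iff_add.
    destruct (pos_succ _ (mul_pos _ _ (dvd_pos _ _ Hs Q_pos) (mul_pos _ _ (lt_0_succ i) m_pos))) as [d Hd].
    exists d; transitivity (s ⊕ s ⊗ ((i ⊕ 𝟙) ⊗ m)); [unfold modulus; ring | rewrite Hd; ring].
  - intros j Hj Hd; destruct (code_mul_dvd s i j Hs Hi Hj Hd) as [-> | Hjs].
    + apply (dies_mono b'); [apply le_iff_add; exists b; ring | exact Hb'].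
    + apply (dies_mono b); [apply le_add_r | exact (Hdies j Hj Hjs)].
Qed.

(* The pair (s, b) is packed into the single existential p, which makes
   "some dead code is at least n" a Sigma02 formula. *)
Definition PackedDeadCode (n p x : N) : Prop :=
  exists s, s ≼ p /\ exists b, b ≼ p /\ p = pair M s b /\ n ≼ s /\ Code s /\
    forall i, i ≺ k -> Dvd (modulus m i) s -> b ≼ x -> ~ C (pair M x i).

Lemma packed_dead_code_iff n :
  (exists p, forall x, PackedDeadCode n p x) <-> exists s b, n ≼ s /\ DeadCode s b.
Proof.
  split.
  - intros [p Hp]; destruct (Hp 𝟘) as [s [_ [b [_ [Hpsb [Hns [Hs _]]]]]]].
    exists s, b; split; [exact Hns|]; split; [exact Hs|]; intros i Hi Hd x Hx.
    destruct (Hp x) as [s' [_ [b' [_ [Hpsb' [_ [_ Hdies]]]]]]].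
    rewrite Hpsb in Hpsb'; apply pair_inj in Hpsb' as [<- <-]; exact (Hdies i Hi Hd Hx).
  - intros [s [b [Hns [Hs Hdies]]]]; exists (pair M s b); intros x.
    exists s; split; [apply le_pair_l|]; exists b; split; [apply le_pair_r|].
    repeat split; [exact Hns | apply Hs | apply Hs | intros i Hi Hd Hx; exact (Hdies i Hi Hd x Hx)].
Qed.

Lemma exists_maximal_dead_code : exists s b, DeadCode s b /\
  forall i, i ≺ k -> ~ Dvd (modulus m i) s -> forall b', ~ Dies b' i.
Proof.
  apply NNPP; intros Hnone.
  assert (Hall : forall n, exists p, forall x, PackedDeadCode n p x).
  { apply C_induction; [unfold PackedDeadCode, Code, Coprime, modulus; delta0 | |].
    - apply packed_dead_code_iff; exists 𝟙, 𝟘; split; [apply lt_le_incl, lt_0_1|].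
      split; [exact code_1|]; intros i _ Hd.
      destruct (modulus_neq_1 i), Hd as [e He]; apply dvd_1_r; exists e; exact He.
    - intros n Hn; apply packed_dead_code_iff in Hn as [s [b [Hns Hdead]]].
      apply packed_dead_code_iff.
      destruct (classic (exists i, i ≺ k /\ ~ Dvd (modulus m i) s /\ exists b', Dies b' i))
        as [[i [Hi [Hns' [b' Hb']]]] | Hmax].
      + destruct (dead_code_extend s b i b' Hdead Hi Hns' Hb') as [Hlt Hdead'].
        exists (s ⊗ modulus m i), (b ⊕ b'); split; [|exact Hdead'].
        rewrite le_succ_l; exact (le_lt_trans _ _ _ Hns Hlt).
      + destruct Hnone; exists s, b; split; [exact Hdead|].
        intros i Hi Hns' b' Hb'; apply Hmax; eauto. }
  destruct (proj1 (packed_dead_code_iff _) (Hall (Q ⊕ 𝟙))) as [s [b [Hs [Hcode _]]]].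
  rewrite le_succ_l in Hs; apply (lt_irrefl Q), (lt_le_trans _ s); [exact Hs | apply code_le, Hcode].
Qed.

End Codes.

Lemma spp_of_sigma2_induction : (forall sigma, set_env M sigma -> sigma2_induction M sigma) -> SPP M.
Proof.
  intros HI k C HC _.
  destruct (exists_common_multiple k) as [m [Hm Hmk]].
  destruct (exists_moduli_multiple m k) as [Q [HQ HQk]].
  destruct (exists_maximal_dead_code k m Q Hm Hmk HQ HQk C (HI _ (fun _ => HC))) as [s [b [[_ Hdies] Hlive]]].
  destruct (delta0_comprehension _ (fun _ => HC) (fun i => i ≺ k /\ ~ Dvd (modulus m i) s))
    as [I [HIset HIdef]]; [unfold modulus; delta0|].
  exists I; split; [exact HIset|]; intros i; rewrite HIdef; split.
  - intros [Hi Hns]; split; [exact Hi|]; intros n; apply NNPP; intros Hfin.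
    apply (Hlive i Hi Hns (n ⊕ 𝟙)); intros x Hx HCx.
    apply Hfin; exists x; split; [rewrite le_succ_l in Hx; exact Hx | exact HCx].
  - intros [Hi Hinf]; split; [exact Hi|]; intros Hd.
    destruct (Hinf b) as [x [Hx HCx]]; exact (Hdies i Hi Hd x (lt_le_incl _ _ Hx) HCx).
Qed.

(** * SPP implies ISigma02 *)

Section ProgressColouring.
Variable X : N -> Prop.
Hypothesis X_set : sets M X.

Definition Refuted (a j s : N) : Prop :=
  j ≺ s /\ forall b, b ≼ j -> exists x, x ≺ s /\ ~ X (triple a b x).

Definition Progress (a t : N) : Prop := exists j, j ≼ t /\ Refuted a j (t ⊕ 𝟙) /\ ~ Refuted a j t.

Definition Stage (c u : N) : Prop := exists t, t ≼ u /\ u = pair M t c /\ Progress c t.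

Definition Colour (n u c : N) : Prop :=
  (c ≼ n /\ Stage c u) \/ (~ (exists c', c' ≼ n /\ Stage c' u) /\ c = n ⊕ 𝟙).

Definition Colouring (n v : N) : Prop :=
  exists u, u ≼ v /\ exists c, c ≼ v /\ v = pair M u c /\ Colour n u c.

Lemma refuted_mono a j j' s s' : Refuted a j s -> j' ≼ j -> s ≼ s' -> Refuted a j' s'.
Proof.
  intros [Hj Hall] Hj' Hs; split; [exact (lt_le_trans _ _ _ (le_lt_trans _ _ _ Hj' Hj) Hs)|].
  intros b Hb; destruct (Hall b (le_trans _ _ _ Hb Hj')) as [x [Hx Hnx]].
  exists x; split; [exact (lt_le_trans _ _ _ Hx Hs) | exact Hnx].
Qed.

Lemma all_refuted a : (forall b, exists x, ~ X (triple a b x)) -> forall j, exists s, Refuted a j s.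
Proof.
  intros Hrefuted; apply (sigma1_induction _ (fun _ => X_set) (Refuted a));
    [unfold Refuted, triple; delta0| |].
  - destruct (Hrefuted 𝟘) as [x Hx]; exists (x ⊕ 𝟙); split; [apply lt_0_succ|].
    intros b Hb; apply le_lteq in Hb as [Hb | ->]; [destruct (nlt_0_r _ Hb)|].
    exists x; split; [apply lt_succ_diag_r | exact Hx].
  - intros j [s Hs]; destruct (Hrefuted (j ⊕ 𝟙)) as [x Hx].
    destruct (refuted_mono a j j s (s ⊕ x ⊕ 𝟙) Hs (le_refl j)) as [Hj Hall];
      [apply lt_le_incl, lt_add_succ|].
    exists (s ⊕ x ⊕ 𝟙); split;
      [exact (le_lt_trans _ _ _ (proj2 (le_succ_l _ _) (proj1 Hs)) (lt_add_succ s x))|].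
    intros b Hb; apply le_lteq in Hb as [Hb | ->]; [exact (Hall b Hb)|].
    exists x; split; [apply lt_iff_add; exists s; ring | exact Hx].
Qed.

Lemma progress_unbounded a : (forall b, exists x, ~ X (triple a b x)) ->
  forall n, exists t, n ≺ t /\ Progress a t.
Proof.
  intros Hrefuted n; destruct (all_refuted a Hrefuted (n ⊕ 𝟙)) as [s Hs].
  destruct (delta0_least _ (fun _ => X_set) (Refuted a (n ⊕ 𝟙))) with s as [s0 [Hs0 Hmin]];
    [unfold Refuted, triple; delta0 | exact Hs|].
  destruct (proj1 (lt_iff_add _ _) (proj1 Hs0)) as [d Hd]; rewrite Hd in Hs0, Hmin.
  exists (n ⊕ 𝟙 ⊕ d); split; [apply lt_iff_add; exists d; ring|].
  exists (n ⊕ 𝟙); split; [apply le_add_r|]; split; [exact Hs0 | apply Hmin, lt_succ_diag_r].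
Qed.

Lemma progress_bounded a b : (forall x, X (triple a b x)) -> exists T, forall t, T ≼ t -> ~ Progress a t.
Proof.
  intros Hwitness; apply NNPP; intros Hunbounded.
  assert (Hprog : forall T, exists t, T ≼ t /\ Progress a t).
  { intros T; apply NNPP; intros HT; apply Hunbounded; exists T; intros t Ht Hp; apply HT; eauto. }
  assert (Hall_refuted : forall j, exists s, Refuted a j s).
  { apply (sigma1_induction _ (fun _ => X_set) (Refuted a)); [unfold Refuted, triple; delta0| |].
    - destruct (Hprog 𝟘) as [t [_ [j [_ [Hj _]]]]].
      exists (t ⊕ 𝟙); exact (refuted_mono _ _ _ _ _ Hj (le_0_l j) (le_refl _)).
    - intros j [s Hs]; destruct (Hprog s) as [t [Hst [j' [_ [Hj' Hnj']]]]].
      exists (t ⊕ 𝟙); apply (refuted_mono _ _ _ _ _ Hj'); [|apply le_refl].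
      apply (proj2 (le_succ_l _ _)), nle_gt; intros Hle; exact (Hnj' (refuted_mono _ _ _ _ _ Hs Hle Hst)). }
  destruct (Hall_refuted b) as [s [_ Hall]]; destruct (Hall b (le_refl b)) as [x [_ Hx]].
  exact (Hx (Hwitness x)).
Qed.

Lemma stage_unique c c' u : Stage c u -> Stage c' u -> c = c'.
Proof. intros [t [_ [-> _]]] [t' [_ [E _]]]; exact (proj2 (pair_inj _ _ _ _ E)). Qed.

Lemma colouring_pair n u c : Colouring n (pair M u c) <-> Colour n u c.
Proof.
  split; [intros [u' [_ [c' [_ [E H]]]]]; apply pair_inj in E as [<- <-]; exact H|].
  intros H; exists u; split; [apply le_pair_l|]; exists c; split; [apply le_pair_r|].
  split; [reflexivity | exact H].
Qed.

Lemma colouring_is_fun n C : (forall v, C v <-> Colouring n v) -> IsFunTo M (n ⊕ 𝟙 ⊕ 𝟙) C.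
Proof.
  intros HC; split; [|split].
  - intros v Hv; apply HC in Hv as [u [_ [c [_ [-> Hc]]]]]; exists u, c; split; [reflexivity|].
    destruct Hc as [[Hc _] | [_ ->]]; [exact (lt_trans _ _ _ Hc (lt_succ_diag_r _)) | apply lt_succ_diag_r].
  - intros u; destruct (classic (exists c, c ≼ n /\ Stage c u)) as [[c Hc] | Hnone];
      [exists c | exists (n ⊕ 𝟙)]; apply HC, colouring_pair; [left | right]; auto.
  - intros u c c' Hc Hc'; apply HC, colouring_pair in Hc, Hc'.
    destruct Hc as [[Hn Hc] | [Hc ->]], Hc' as [[Hn' Hc'] | [Hc' ->]];
      [exact (stage_unique _ _ _ Hc Hc') | destruct Hc'; exists c | destruct Hc; exists c' | reflexivity];
      split; assumption.
Qed.

Lemma colour_infinite_iff n c : c ≼ n ->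
  (forall m, exists u, m ≺ u /\ Colouring n (pair M u c)) <-> ~ exists b, forall x, X (triple c b x).
Proof.
  intros Hc; split.
  - intros Hinf [b Hb]; destruct (progress_bounded c b Hb) as [T HT].
    destruct (Hinf (pair M T c)) as [u [Hu Hcol]].
    apply colouring_pair in Hcol as [[_ [t [_ [-> Ht]]]] | [_ ->]];
      [|exact (lt_irrefl _ Hc)].
    destruct (classic (T ≼ t)) as [HTt | HtT]; [exact (HT t HTt Ht)|].
    exact (lt_irrefl _ (lt_trans _ _ _ (pair_lt_mono_l _ _ c (nle_gt _ _ HtT)) Hu)).
  - intros Hnone m.
    assert (Hrefuted : forall b, exists x, ~ X (triple c b x)).
    { intros b; apply NNPP; intros Hb; apply Hnone; exists b; intros x; apply NNPP; eauto. }
    destruct (progress_unbounded c Hrefuted m) as [t [Hmt Ht]].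
    exists (pair M t c); split; [exact (lt_le_trans _ _ _ Hmt (le_pair_l t c))|].
    apply colouring_pair; left; split; [exact Hc|].
    exists t; split; [apply le_pair_l | split; [reflexivity | exact Ht]].
Qed.

Lemma triple_sigma2_induction : SPP M -> (exists b, forall x, X (triple 𝟘 b x)) ->
  (forall a, (exists b, forall x, X (triple a b x)) -> exists b, forall x, X (triple (a ⊕ 𝟙) b x)) ->
  forall n, exists b, forall x, X (triple n b x).
Proof.
  intros spp H0 HS n.
  destruct (delta0_comprehension _ (fun _ => X_set) (Colouring n)) as [C [HCset HC]];
    [unfold Colouring, Colour, Stage, Progress, Refuted, triple; delta0|].
  destruct (spp _ C HCset (colouring_is_fun n C HC)) as [I [HIset HI]].
  assert (HIc : forall c, c ≼ n -> I c <-> ~ exists b, forall x, X (triple c b x)).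
  { intros c Hc; rewrite HI, <- (colour_infinite_iff n c Hc).
    setoid_rewrite HC; split; [intros [_ H]; exact H|].
    intros H; split; [exact (lt_trans _ _ _ Hc (lt_succ_diag_r _)) | exact H]. }
  assert (Hfinite : forall c, c ≼ n -> ~ I c).
  { apply (delta0_induction _ (fun _ => HIset) (fun c => c ≼ n -> ~ I c)); [delta0| |].
    - intros Hn; apply HIc in Hn; rewrite Hn; intros H; exact (H H0).
    - intros c IH Hc; rewrite (HIc _ Hc); intros H; apply H, HS, NNPP.
      rewrite <- HIc; [apply IH|]; exact (le_trans _ _ _ (lt_le_incl _ _ (lt_succ_diag_r c)) Hc). }
  apply NNPP; intros Hn; exact (Hfinite n (le_refl n) (proj2 (HIc n (le_refl n)) Hn)).
Qed.

End ProgressColouring.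

Lemma sigma2_induction_of_spp : SPP M -> forall sigma, set_env M sigma -> sigma2_induction M sigma.
Proof.
  intros HS sigma Hs Q HQ H0 HSt.
  destruct (delta0_comprehension _ Hs (fun u => exists a, a ≼ u /\ exists b, b ≼ u /\
      exists x, x ≼ u /\ u = triple a b x /\ Q a b x)) as [X [HXset HX]];
    [unfold triple; delta0; apply delta0_weaken, HQ|].
  assert (HXQ : forall a b x, X (triple a b x) <-> Q a b x).
  { intros a b x; rewrite HX; split.
    - intros [a' [_ [b' [_ [x' [_ [E HQ']]]]]]]; unfold triple in E.
      apply pair_inj in E as [<- E]; apply pair_inj in E as [<- <-]; exact HQ'.
    - intros HQ'; exists a; split; [apply le_pair_l|].
      exists b; split; [exact (le_trans _ _ _ (le_pair_l b x) (le_pair_r _ _))|].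
      exists x; split; [exact (le_trans _ _ _ (le_pair_r b x) (le_pair_r _ _))|].
      split; [reflexivity | exact HQ']. }
  setoid_rewrite <- HXQ in H0; setoid_rewrite <- HXQ in HSt; setoid_rewrite <- HXQ.
  exact (triple_sigma2_induction X HXset HS H0 HSt).
Qed.

End Model.

Lemma sigma2_induction_of_isigma02 M :
  ISigma02 M -> forall sigma, set_env M sigma -> sigma2_induction M sigma.
Proof.
  intros HI sigma Hs Q [phi [pi [Hphi H]]] H0 HS.
  assert (E : forall a, sat M (scons a pi) sigma (fEx (fAll phi)) <-> exists b, forall x, Q a b x)
    by (intros a; split; intros [b Hb]; exists b; intros x; apply (H (scons x (scons b (scons a pi)))), Hb).
  intros a; apply E, (HI (fEx (fAll phi)) Hphi pi sigma Hs); [apply E, H0 | intros c Hc; apply E, HS, E, Hc].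
Qed.

Lemma isigma02_of_sigma2_induction M :
  (forall sigma, set_env M sigma -> sigma2_induction M sigma) -> ISigma02 M.
Proof.
  intros HI phi Hphi rho sigma Hs.
  destruct phi as [| | | | | | | | phi | | | |]; try contradiction.
  destruct phi as [| | | | | | | phi | | | | |]; try contradiction.
  apply (HI sigma Hs (fun a b x => sat M (scons x (scons b (scons a rho))) sigma phi)).
  exists phi, rho; split; [exact Hphi | reflexivity].
Qed.

Theorem mainTheorem3 :
  forall M : L2str, RCA0 M -> (ISigma02 M <-> SPP M).
Proof.
  intros M HM; split.
  - intros HI k C HC.
    exact (spp_of_sigma2_induction M HM (fun _ => C) (fun _ => HC)
             (sigma2_induction_of_isigma02 M HI) k C HC).
  - intros HS; apply isigma02_of_sigma2_induction; intros sigma Hs.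
    exact (sigma2_induction_of_spp M HM sigma Hs HS sigma Hs).
Qed.
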